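(* Let $M$ be a maximal set of colored hypergraphs that are degree-irreducible and degree-reducibly independent. Then $M$ is also a maximal set of hypergraphs that are irreducible and reducibly independent.
   Context: Fix $n\ge2$, $V=\mathbb{C}^n$ with standard basis $e_1,\dots,e_n$ and ${\rm SL}_n$ acting by left multiplication, integers $n_1,\dots,n_{n-1}\ge0$, and $W=\bigoplus_{i=1}^{n-1}(\bigwedge^iV)^{n_i}$; write the component of $t\in W$ in the $j$-th copy of $\bigwedge^iV$ as $t_{i,j}=\sum_{a_1<\dots<a_i}t_{i,j}^{a_1\cdots a_i}e_{a_1}\wedge\dots\wedge e_{a_i}$, extended to all index tuples by total antisymmetry. A colored hypergraph $\Gamma$ consists of an ordered finite vertex set and a finite family of hyperedges; each hyperedge has a size $i\in\{1,\dots,n-1\}$, a color $j\in\{1,\dots,n_i\}$ and is a multiset of $i$ vertices (its connections; it is looping if all connections are at one vertex); every vertex has exactly $n$ connections in total. The invariant $f_\Gamma\in\mathbb{C}[W]^{{\rm SL}_n}$ is the complete contraction obtained by taking one Levi-Civita symbol $\varepsilon_{a_1\cdots a_n}$ per vertex and one copy of the components of $t_{i,j}$ per hyperedge of size $i$ and color $j$, and contracting each of the $i$ indices of a hyperedge with an index slot of the vertex at which the corresponding connection sits (each slot used once); $f_\Gamma$ is determined by $\Gamma$ up to sign (a fixed sign convention is chosen), and $f$ is extended linearly to linear combinations of hypergraphs (graphsums). $\Gamma$ is disconnected if its vertices split into two nonempty classes with no hyperedge connecting both. A graphsum $\Upsilon$ is reducible if $f_\Upsilon=0$ or $f_\Upsilon=\sum_i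 a_if_{\Gamma_i}$ with all $\Gamma_i$ disconnected, and irreducible otherwise; graphsums are reducibly independent if only the trivial linear combination of them is reducible, and $\Upsilon_1\simeq_r\Upsilon_2$ means $\Upsilon_1-\Upsilon_2$ is reducible. The virtual degree of a vertex $v$ is $n$ minus the total number of connections at $v$ of looping hyperedges at $v$. The virtual degree type $d(\Gamma)$ of a hypergraph with $k$ vertices is the non-increasing sequence $(d_1,\dots,d_k)$ of virtual degrees of its vertices; for hypergraphs with the same number $k$ of vertices set $\Gamma<\Gamma'$ iff $d_1\le d_1',\dots,d_{k-1}\le d'_{k-1}$ and $d_k<d'_k$. A graphsum $\sum\Gamma_i$ is degree-reducible if it is $\simeq_r$ to $0$ or to a graphsum $\sum\Gamma'_j$ with $d(\Gamma'_j)<d(\Gamma_i)$ for all $i,j$; degree-irreducible otherwise. Graphsums $\Upsilon_1,\dots,\Upsilon_N$ are degree-reducibly independent if $\sum a_i\Upsilon_i$ is degree-reducible only when all $a_i=0$. *)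

(* C is modelled by algC (algebraic complex numbers, an
   algebraically closed field of characteristic 0); polynomial invariants
   are represented as the functions W -> algC they define. *)
From HB Require Import structures.
From mathcomp Require Import all_boot all_order all_algebra all_field.
Set Implicit Arguments. Unset Strict Implicit. Unset Printing Implicit Defensive.
Import Order.TTheory GRing.Theory Num.Theory.

(* A hyperedge: (size i, color j, list of the i vertices of its connections). *)
Definition edge := (nat * nat * seq nat)%type.
Definition e_size (e : edge) : nat := e.1.1.
Definition e_col (e : edge) : nat := e.1.2.
Definition e_vs (e : edge) : seq nat := e.2.

(* A colored hypergraph: (number k of vertices 0..k-1, list of hyperedges). *)
Definition hgraph := (nat * seq edge)%type.
Definition hg_k (g : hgraph) : nat := g.1.
Definition hg_edges (g : hgraph) : seq edge := g.2.

(* Well-formedness for fixed n and multiplicities ns i = n_i. *)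
Definition edge_ok (n : nat) (ns : nat -> nat) (k : nat) (e : edge) : bool :=
  [&& 1 <= e_size e <= n.-1, 1 <= e_col e <= ns (e_size e),
      size (e_vs e) == e_size e & all (fun v => v < k) (e_vs e)].

Definition conns (g : hgraph) : seq nat := flatten (map e_vs (hg_edges g)).

Definition valid (n : nat) (ns : nat -> nat) (g : hgraph) : Prop :=
  0 < hg_k g /\ all (edge_ok n ns (hg_k g)) (hg_edges g) /\
  forall v, v < hg_k g -> count_mem v (conns g) = n.

(* A point of W: t i j S is the coordinate of e_{a_1}/\.../\e_{a_i}
   (a_1<...<a_i the elements of S) in the j-th copy of /\^i V. *)
Definition Wpt (n : nat) := nat -> nat -> {set 'I_n} -> algC.

Definition inversions (s : seq nat) : nat :=
  \sum_(p < size s) \sum_(q < size s) ((p < q) && (nth 0 s q < nth 0 s p)).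

Definition alt_sign (s : seq nat) : algC :=
  (if uniq s then (-1) ^+ inversions s else 0)%R.

(* antisymmetric extension of the components of t_{i,j} *)
Definition comp (n : nat) (t : Wpt n) (i j : nat) (s : seq nat) : algC :=
  (alt_sign s * t i j [set x : 'I_n | val x \in s])%R.

(* f_Gamma: complete contraction; each vertex carries a Levi-Civita symbol
   whose slots receive the indices of its connections in list order. *)
Definition f_hg (n : nat) (g : hgraph) (t : Wpt n) : algC :=
  (\sum_(sg : (size (conns g)).-tuple 'I_n)
    let s := map val sg in
    (\prod_(v < hg_k g) alt_sign [seq x.2 | x <- zip (conns g) s & x.1 == val v])
    * \prod_(p <- zip (hg_edges g) (reshape (map size (map e_vs (hg_edges g))) s))
        comp t (e_size p.1) (e_col p.1) p.2)%R.

Definition graphsum := seq (algC * hgraph).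
Definition f_gs (n : nat) (U : graphsum) (t : Wpt n) : algC :=
  (\sum_(p <- U) p.1 * f_hg p.2 t)%R.
Definition gs_valid n ns (U : graphsum) : Prop := forall p, p \in U -> valid n ns p.2.
Definition gs_sub (U1 U2 : graphsum) : graphsum :=
  U1 ++ [seq ((- p.1)%R, p.2) | p <- U2].

Definition disconnected (g : hgraph) : Prop :=
  exists S : nat -> bool,
    (exists v, v < hg_k g /\ S v) /\ (exists v, v < hg_k g /\ ~~ S v) /\
    forall e, e \in hg_edges g -> all S (e_vs e) || all (fun v => ~~ S v) (e_vs e).

Definition reducible n ns (U : graphsum) : Prop :=
  (forall t : Wpt n, f_gs U t = 0%R) \/
  exists U' : graphsum, gs_valid n ns U' /\
    (forall p, p \in U' -> disconnected p.2) /\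
    forall t : Wpt n, f_gs U t = f_gs U' t.

Definition red_equiv n ns (U1 U2 : graphsum) : Prop := reducible n ns (gs_sub U1 U2).

Definition irreducible n ns (g : hgraph) : Prop := ~ reducible n ns [:: (1%R, g)].

(* M a set of hypergraphs; only finite combinations of distinct members *)
Definition red_indep n ns (M : hgraph -> Prop) : Prop :=
  forall (U : graphsum), uniq (map snd U) -> (forall p, p \in U -> M p.2) ->
    reducible n ns U -> forall p, p \in U -> p.1 = 0%R.

Definition vdeg (n : nat) (g : hgraph) (v : nat) : nat :=
  n - \sum_(e <- hg_edges g | all (fun w => w == v) (e_vs e)) size (e_vs e).
Definition dtype (n : nat) (g : hgraph) : seq nat :=
  sort geq [seq vdeg n g v | v <- iota 0 (hg_k g)].

Definition dlt (n : nat) (g g' : hgraph) : Prop :=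
  hg_k g = hg_k g' /\ 0 < hg_k g /\
  (forall p, p < (hg_k g).-1 -> nth 0 (dtype n g) p <= nth 0 (dtype n g') p) /\
  nth 0 (dtype n g) (hg_k g).-1 < nth 0 (dtype n g') (hg_k g).-1.

Definition gs_support (U : graphsum) : seq hgraph := [seq p.2 | p <- U & p.1 != 0%R].

Definition deg_reducible n ns (U : graphsum) : Prop :=
  red_equiv n ns U [::] \/
  exists U' : graphsum, gs_valid n ns U' /\ red_equiv n ns U U' /\
    forall g g', g \in gs_support U -> g' \in map snd U' -> dlt n g' g.

Definition deg_irreducible n ns (g : hgraph) : Prop := ~ deg_reducible n ns [:: (1%R, g)].

Definition deg_red_indep n ns (M : hgraph -> Prop) : Prop :=
  forall (U : graphsum), uniq (map snd U) -> (forall p, p \in U -> M p.2) ->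
    deg_reducible n ns U -> forall p, p \in U -> p.1 = 0%R.

Definition P_deg n ns (M : hgraph -> Prop) : Prop :=
  (forall g, M g -> valid n ns g) /\ (forall g, M g -> deg_irreducible n ns g) /\
  deg_red_indep n ns M.

Definition P_red n ns (M : hgraph -> Prop) : Prop :=
  (forall g, M g -> valid n ns g) /\ (forall g, M g -> irreducible n ns g) /\
  red_indep n ns M.

Definition maximal_set (P : (hgraph -> Prop) -> Prop) (M : hgraph -> Prop) : Prop :=
  P M /\ forall M' : hgraph -> Prop, P M' -> (forall g, M g -> M' g) ->
    forall g, M' g -> M g.

(* Let Q be the set of valid hypergraphs that lie in M or are disconnected.
   By strong induction on the sum of the virtual degree type, the invariant of
   every valid hypergraph g lies in the span of the invariants of Q: if g is not
   in M, maximality of M yields a degree-reducible combination of g and members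
   of M in which g has a nonzero coefficient (independence of M rules out a zero
   one), and degree-reducibility expresses that combination through
   disconnected hypergraphs and hypergraphs of smaller degree type.
   Since reducibility implies degree-reducibility, M has the properties of the
   second kind; and a hypergraph g outside M in a larger reducibly independent
   family M' would give, by the span property, a reducible nontrivial
   combination of distinct members of M', a contradiction. *)
From mathcomp Require Import all_boot all_order all_algebra all_field.
From mathcomp Require Import zify ring.
From Stdlib Require Import Classical.
Set Implicit Arguments. Unset Strict Implicit. Unset Printing Implicit Defensive.
Import Order.TTheory GRing.Theory Num.Theory.
Local Open Scope ring_scope.

Definition in_span n (P : hgraph -> Prop) (F : Wpt n -> algC) : Prop :=
  exists U : graphsum, (forall p, p \in U -> P p.2) /\ forall t, F t = f_gs U t.

Definition gs_scale (a : algC) (U : graphsum) : graphsum :=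
  [seq (a * p.1, p.2) | p <- U].

Definition gs_collapse (U : graphsum) : graphsum :=
  [seq (\sum_(p <- U | p.2 == h) p.1, h) | h <- undup (map snd U)].

Definition dtype_weight n (g : hgraph) : nat :=
  (\sum_(i < hg_k g) nth 0 (dtype n g) i)%N.

Section GraphsumAlgebra.

Variable n : nat.
Implicit Types (U V : graphsum) (t : Wpt n).

Lemma f_gs_cat U V t : f_gs (U ++ V) t = f_gs U t + f_gs V t.
Proof. by rewrite /f_gs big_cat. Qed.

Lemma f_gs_sub U V t : f_gs (gs_sub U V) t = f_gs U t - f_gs V t.
Proof.
rewrite /gs_sub f_gs_cat /f_gs big_map -sumrN; congr (_ + _).
by apply: eq_bigr => p _; rewrite mulNr.
Qed.

Lemma f_gs_scale a U t : f_gs (gs_scale a U) t = a * f_gs U t.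
Proof. by rewrite /f_gs big_map mulr_sumr; apply: eq_bigr => p _; rewrite mulrA. Qed.

Lemma f_gs_split U g t :
  f_gs U t = (\sum_(p <- U | p.2 == g) p.1) * f_hg g t
             + f_gs [seq p <- U | p.2 != g] t.
Proof.
rewrite /f_gs (bigID (fun p : algC * hgraph => p.2 == g)) /= big_filter.
by rewrite mulr_suml; congr (_ + _); apply: eq_bigr => p /eqP ->.
Qed.

Lemma map_snd_gs_scale a U : map snd (gs_scale a U) = map snd U.
Proof. by rewrite /gs_scale -map_comp. Qed.

Lemma map_snd_gs_collapse U : map snd (gs_collapse U) = undup (map snd U).
Proof. by rewrite /gs_collapse -map_comp map_id. Qed.

Lemma f_gs_collapse U t : f_gs (gs_collapse U) t = f_gs U t.
Proof.
rewrite /f_gs big_map.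
transitivity (\sum_(h <- undup (map snd U)) \sum_(p <- U)
                (if p.2 == h then p.1 * f_hg p.2 t else 0)).
  apply: eq_bigr => h _; rewrite /= mulr_suml big_mkcond; apply: eq_bigr => p _.
  by case: eqP => [->|_]; rewrite ?mul0r.
rewrite exchange_big; apply: eq_big_seq => p Hp.
rewrite -big_mkcond -big_filter.
have -> : [seq h <- undup (map snd U) | p.2 == h] = [:: p.2].
  rewrite (@eq_filter _ _ (pred1 p.2)) => [|h]; last exact: eq_sym.
  apply: filter_pred1_uniq; first exact: undup_uniq.
  by rewrite mem_undup map_f.
by rewrite big_seq1.
Qed.

Lemma sum_coef_uniq U q :
  uniq (map snd U) -> q \in U -> \sum_(p <- U | p.2 == q.2) p.1 = q.1.
Proof.
elim: U => [//|a U IH] /= /andP [aU Uu]; rewrite inE big_cons.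
have notin_U p : p \in U -> p.2 != a.2.
  by move=> pU; apply: contraNneq aU => <-; rewrite map_f.
case/orP=> [/eqP ->|qU].
  by rewrite eqxx big1_seq ?addr0 // => p /andP [/eqP pa /notin_U]; rewrite pa eqxx.
by rewrite eq_sym (negbTE (notin_U q qU)) IH.
Qed.

Lemma gs_support_filter (a : pred (algC * hgraph)) U :
  {subset gs_support [seq p <- U | a p] <= gs_support U}.
Proof.
move=> h /mapP [p]; rewrite !mem_filter => /andP [p1 /andP [_ pU]] ->.
by rewrite map_f // mem_filter p1.
Qed.

End GraphsumAlgebra.

Section Span.

Variable n : nat.
Implicit Types (P Q : hgraph -> Prop) (F G : Wpt n -> algC).

Lemma in_span_ext P F G : in_span P F -> (forall t, F t = G t) -> in_span P G.
Proof. by move=> [U [PU FU]] FG; exists U; split=> // t; rewrite -FG. Qed.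

Lemma in_span0 P : in_span P (fun _ : Wpt n => 0).
Proof. by exists [::]; split=> // t; rewrite /f_gs big_nil. Qed.

Lemma in_spanD P F G : in_span P F -> in_span P G -> in_span P (fun t => F t + G t).
Proof.
move=> [U [PU FU]] [V [PV GV]]; exists (U ++ V); split; last first.
  by move=> t; rewrite f_gs_cat FU GV.
by move=> p; rewrite mem_cat => /orP [] ?; [apply: PU | apply: PV].
Qed.

Lemma in_spanZ P a F : in_span P F -> in_span P (fun t => a * F t).
Proof.
move=> [U [PU FU]]; exists (gs_scale a U); split.
  by move=> p /mapP [q qU ->]; exact: (PU q qU).
by move=> t; rewrite f_gs_scale FU.
Qed.

Lemma in_span_hg P g : P g -> in_span P (@f_hg n g).
Proof.
move=> Pg; exists [:: (1, g)]; split; first by move=> p; rewrite inE => /eqP ->.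
by move=> t; rewrite /f_gs big_seq1 mul1r.
Qed.

Lemma in_span_gs P U :
  (forall p, p \in U -> in_span P (@f_hg n p.2)) -> in_span P (@f_gs n U).
Proof.
elim: U => [|q U IH] spanU.
  by apply: in_span_ext (in_span0 _) _ => t; rewrite /f_gs big_nil.
have spanU' p : p \in U -> in_span P (@f_hg n p.2).
  by move=> pU; apply: spanU; rewrite inE pU orbT.
apply: in_span_ext (in_spanD (in_spanZ q.1 (spanU q (mem_head _ _))) (IH spanU')) _.
by move=> t; rewrite /f_gs big_cons.
Qed.

Lemma in_span_sub P Q F : (forall g, P g -> Q g) -> in_span P F -> in_span Q F.
Proof. by move=> PQ [U [PU FU]]; exists U; split=> // p /PU /PQ. Qed.

Lemma in_span_orP P Q F : in_span (fun h => P h \/ Q h) F ->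
  exists G, in_span P G /\ in_span Q (fun t => F t - G t).
Proof.
move=> [U []]; elim: U F => [|q U IH] F PQU FU.
  exists (fun _ => 0); split; first exact: in_span0.
  by apply: in_span_ext (in_span0 _) _ => t; rewrite FU /f_gs big_nil subr0.
have PQU' p : p \in U -> P p.2 \/ Q p.2 by move=> pU; apply: PQU; rewrite inE pU orbT.
have [G [PG QG]] := IH (f_gs U) PQU' (fun t => erefl).
have FU' t : F t = q.1 * f_hg q.2 t + f_gs U t by rewrite FU /f_gs big_cons.
case: (PQU q (mem_head _ _)) => [Pq | Qq].
- exists (fun t => q.1 * f_hg q.2 t + G t); split.
    exact: in_spanD (in_spanZ _ (in_span_hg Pq)) PG.
  by apply: in_span_ext QG _ => t; rewrite FU'; ring.
- exists G; split=> //.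
  apply: in_span_ext (in_spanD (in_spanZ q.1 (in_span_hg Qq)) QG) _ => t.
  by rewrite FU'; ring.
Qed.

End Span.

Section Reducibility.

Variables (n : nat) (ns : nat -> nat).

Lemma reducibleE U :
  reducible n ns U <-> in_span (fun h => valid n ns h /\ disconnected h) (@f_gs n U).
Proof.
split.
  case=> [U0 | [U' [validU' [discU' UU']]]].
    by apply: in_span_ext (in_span0 _ _) _ => t; rewrite U0.
  by exists U'; split=> // p pU'; split; [apply: validU' | apply: discU'].
move=> [U' [QU' UU']]; right; exists U'.
by split; [|split] => // p /QU' [].
Qed.

Lemma reducible_ext U V :
  reducible n ns U -> (forall t : Wpt n, f_gs U t = f_gs V t) -> reducible n ns V.
Proof. by move=> /reducibleE redU UV; apply/reducibleE; apply: in_span_ext redU UV. Qed.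

Lemma reducible_deg_reducible U : reducible n ns U -> deg_reducible n ns U.
Proof. by move=> redU; left; rewrite /red_equiv /gs_sub cats0. Qed.

Lemma deg_reducible_ext U V :
  deg_reducible n ns U -> (forall t : Wpt n, f_gs U t = f_gs V t) ->
  {subset gs_support V <= gs_support U} -> deg_reducible n ns V.
Proof.
move=> [redU | [U' [validU' [redUU' ltU']]]] UV suppVU.
  by left; apply: reducible_ext redU _ => t; rewrite !f_gs_sub UV.
right; exists U'; split=> //; split.
  by apply: reducible_ext redUU' _ => t; rewrite !f_gs_sub UV.
by move=> g g' /suppVU; apply: ltU'.
Qed.

Lemma deg_reducible_span (P : hgraph -> Prop) U :
  (forall h, valid n ns h /\ disconnected h -> P h) ->
  (forall h, valid n ns h -> (forall g, g \in gs_support U -> dlt n h g) ->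
     in_span P (@f_hg n h)) ->
  deg_reducible n ns U -> in_span P (@f_gs n U).
Proof.
move=> discP lowerP [/reducibleE redU | [U' [validU' [/reducibleE redUU' ltU']]]].
  apply: in_span_ext (in_span_sub discP redU) _ => t.
  by rewrite f_gs_sub /f_gs big_nil subr0.
have spanU' : in_span P (@f_gs n U').
  apply: in_span_gs => p pU'; apply: lowerP (validU' p pU') _ => g g_supp.
  exact: ltU' (map_f _ pU').
apply: in_span_ext (in_spanD (in_span_sub discP redUU') spanU') _ => t.
by rewrite f_gs_sub subrK.
Qed.

Lemma dlt_weight g' g : dlt n g' g -> (dtype_weight n g' < dtype_weight n g)%N.
Proof.
rewrite /dtype_weight; case=> -> [].
case: (hg_k g) => [//|k] _ [le_init lt_last] /=.
rewrite !big_ord_recr /= -addnS leq_add //.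
by apply: leq_sum => i _; apply: le_init.
Qed.

Lemma P_deg_P_red M : P_deg n ns M -> P_red n ns M.
Proof.
move=> [validM [irrM indepM]]; split=> //; split.
  by move=> g Mg /reducible_deg_reducible; apply: irrM.
by move=> U Uu MU /reducible_deg_reducible; apply: indepM.
Qed.

End Reducibility.

Section MaximalDegreeSets.

Variables (n : nat) (ns : nat -> nat) (M : hgraph -> Prop).
Hypothesis maxM : maximal_set (P_deg n ns) M.

Let in_M_or_disconnected (h : hgraph) : Prop :=
  M h \/ (valid n ns h /\ disconnected h).

Lemma maximal_deg_witness g : valid n ns g -> ~ M g ->
  exists U : graphsum, [/\ uniq (map snd U), forall p, p \in U -> M p.2 \/ p.2 = g,
    deg_reducible n ns U & exists2 q, q \in U & q.2 = g /\ q.1 != 0].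
Proof.
have [[validM [_ indepM]] maxP] := maxM.
move=> validg notMg.
have [U [Uu MgU redU [p0 p0U p0_nz]]] : exists U : graphsum,
    [/\ uniq (map snd U), forall p, p \in U -> M p.2 \/ p.2 = g,
        deg_reducible n ns U & exists2 p, p \in U & p.1 != 0].
  apply: NNPP => noU; apply: notMg.
  apply: (maxP (fun h => M h \/ h = g)); [split; [|split] | by left | by right].
  - by move=> h [/validM | ->].
  - move=> h Mgh redh; apply: noU; exists [:: (1, h)]; split=> //.
      by move=> p; rewrite inE => /eqP ->.
    by exists (1, h); rewrite ?mem_head ?oner_neq0.
  - move=> V Vu MgV redV p pV; apply/eqP; apply: contra_notT noU => p_nz.
    by exists V; split=> //; exists p.
case: (boolP (has (fun q => (q.2 == g) && (q.1 != 0)) U)) => [|/hasPn g_zero].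
  by case/hasP=> q qU /andP [/eqP qg q_nz]; exists U; split=> //; exists q.
pose UM := [seq p <- U | p.2 != g].
have redUM : deg_reducible n ns UM.
  have suppUM := @gs_support_filter (fun p : algC * hgraph => p.2 != g) U.
  apply: (deg_reducible_ext redU _ suppUM) => t.
  rewrite (f_gs_split _ g) big1_seq ?mul0r ?add0r // => p /andP [pg pU].
  by apply: contraNeq (g_zero p pU) => p_nz; rewrite pg.
have MUM p : p \in UM -> M p.2.
  by rewrite mem_filter => /andP [pg /MgU [] // pg']; rewrite pg' eqxx in pg.
have UMu : uniq (map snd UM) by apply: subseq_uniq (map_subseq _ (filter_subseq _ _)) Uu.
case: (eqVneq p0.2 g) => p0g; first by have := g_zero p0 p0U; rewrite p0g eqxx p0_nz.
by move: p0_nz; rewrite (indepM UM UMu MUM redUM p0) ?eqxx // mem_filter p0g.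
Qed.

Lemma maximal_deg_span g : valid n ns g -> in_span in_M_or_disconnected (@f_hg n g).
Proof.
have [m] := ubnP (dtype_weight n g); elim: m g => // m IH g ltgm validg.
case: (classic (M g)) => [Mg | notMg]; first by apply: in_span_hg; left.
have [U [Uu MgU redU [q qU [qg q_nz]]]] := maximal_deg_witness validg notMg.
pose UM := [seq p <- U | p.2 != g].
have g_supp : g \in gs_support U by rewrite -qg map_f // mem_filter q_nz.
have spanU : in_span in_M_or_disconnected (@f_gs n U).
  apply: deg_reducible_span redU => [h discH | h validh lth]; first by right.
  apply: IH validh; have := dlt_weight (lth g g_supp); lia.
have spanUM : in_span in_M_or_disconnected (@f_gs n UM).
  exists UM; split=> // p; rewrite mem_filter => /andP [pg /MgU [Mp | pg']].
    by left.
  by rewrite pg' eqxx in pg.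
have coef_g : \sum_(p <- U | p.2 == g) p.1 = q.1 by rewrite -qg sum_coef_uniq.
apply: in_span_ext (in_spanZ q.1^-1 (in_spanD spanU (in_spanZ (-1) spanUM))) _ => t.
by rewrite (f_gs_split U g) coef_g mulN1r addrK mulrA mulVf // mul1r.
Qed.

End MaximalDegreeSets.

Lemma red_indep_span_mem n ns (M M' : hgraph -> Prop) g :
  red_indep n ns M' -> (forall h, M h -> M' h) -> M' g ->
  in_span (fun h => M h \/ (valid n ns h /\ disconnected h)) (@f_hg n g) -> M g.
Proof.
move=> indepM' MM' M'g /in_span_orP [G [[U [MU GU]] redG]].
apply: NNPP => notMg.
pose V : graphsum := (1, g) :: gs_scale (-1) (gs_collapse U).
have snd_V : map snd V = g :: undup (map snd U).
  by rewrite /= map_snd_gs_scale map_snd_gs_collapse.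
have g_notin_U : g \notin map snd U.
  by apply/mapP => -[p pU pg]; apply: notMg; rewrite pg; apply: MU.
have Vu : uniq (map snd V) by rewrite snd_V /= mem_undup g_notin_U undup_uniq.
have M'V p : p \in V -> M' p.2.
  move/(map_f snd); rewrite snd_V inE mem_undup => /predU1P [-> // | /mapP [q qU ->]].
  exact: MM' (MU q qU).
have redV : reducible n ns V.
  apply/reducibleE; apply: in_span_ext redG _ => t.
  by rewrite /f_gs big_cons -/(f_gs _ t) f_gs_scale f_gs_collapse -GU mul1r mulN1r.
by have /eqP := indepM' V Vu M'V redV (1, g) (mem_head _ _); rewrite oner_eq0.
Qed.

Local Close Scope ring_scope.

Theorem mainTheorem4 (n : nat) (ns : nat -> nat) (M : hgraph -> Prop) :
  2 <= n -> maximal_set (P_deg n ns) M -> maximal_set (P_red n ns) M.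
Proof.
move=> _ maxM; split; first exact: P_deg_P_red maxM.1.
move=> M' [validM' [_ indepM']] MM' g M'g.
exact: red_indep_span_mem indepM' MM' M'g (maximal_deg_span maxM (validM' g M'g)).
Qed.
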